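(* Let $U=(E,\mathcal{D},\rho)$ be a U-matroid with $E\setminus\mathrm{Atom}(\mathcal{D})=\{a_1,\dots,a_m\}$, where $\mathrm{Atom}(\mathcal{D})=\{a\in E:\{a\}\in\mathcal{D}\}$. Then: 1. The iterated generous extension $\hat\rho=\rho_{a_1,\dots,a_m}=(((\rho_{a_1})_{a_2})\dots)_{a_m}$, a matroid rank function on $2^E$, dominates every other matroid extension of $\rho$ to $2^E$ (i.e. $\hat\rho(S)\ge\rho'(S)$ for all $S$ and every matroid rank function $\rho'$ on $2^E$ with $\rho'|_{\mathcal{D}}=\rho$). 2. In particular, $\hat\rho$ is an invariant of $\rho$ that is independent of the order of the $a_i$ and dominates every other matroid extension of $\rho$. 3. For every lattice $\mathcal{D}'$ with $\mathcal{D}\subseteq\mathcal{D}'\subseteq 2^E$, the lattice extension $\hat\rho|_{\mathcal{D}'}$ dominates every other lattice extension of $U$ to $\mathcal{D}'$ (U-matroid rank function on $\mathcal{D}'$ restricting to $\rho$ on $\mathcal{D}$).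
   Context: A U-matroid is a triple $(E,\mathcal{D},\rho)$ with $E$ finite, $\mathcal{D}\subseteq2^E$ an accessible distributive lattice of sets (closed under union and intersection, containing $\emptyset,E$, every nonempty member $A$ has some $x\in A$ with $A-x\in\mathcal{D}$), and $\rho:\mathcal{D}\to\mathbb{N}$ with $\rho(\emptyset)=0$, monotone, submodular, with unit increase. For $a\in E\setminus\mathrm{Atom}(\mathcal{D})$, let $\mathcal{D}[a]=\mathcal{D}\cup\{S\cup\{a\}:S\in\mathcal{D}\}$ and $\sup_\mathcal{D}(S)$ the smallest element of $\mathcal{D}$ containing $S$. The generous atom extension $\rho_a:\mathcal{D}[a]\to\mathbb{N}$ is defined by $\rho_a(S)=\rho(S)$ if $S\in\mathcal{D}$; $\rho_a(S)=\rho(S-a)$ if $S\notin\mathcal{D}$ and $\rho(S-a)=\rho(\sup_\mathcal{D}(S))$; and $\rho_a(S)=\rho(S-a)+1$ if $S\notin\mathcal{D}$ and $\rho(S-a)<\rho(\sup_\mathcal{D}(S))$. It is known that $(E,\mathcal{D}[a],\rho_a)$ is again a U-matroid, so the extension can be iterated. *)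

From mathcomp Require Import all_boot.
Set Implicit Arguments. Unset Strict Implicit. Unset Printing Implicit Defensive.

Section UMatroid.
Variable E : finType.

(* D is a lattice of sets: contains set0 and setT, closed under union/intersection
   (a family of sets closed under these is automatically distributive). *)
Definition is_set_lattice (D : {set {set E}}) : Prop :=
  [/\ set0 \in D, setT \in D,
      (forall A B, A \in D -> B \in D -> A :|: B \in D) &
      (forall A B, A \in D -> B \in D -> A :&: B \in D)].

Definition accessible (D : {set {set E}}) : Prop :=
  forall A, A \in D -> A != set0 -> exists2 x, x \in A & A :\ x \in D.

Definition is_adl (D : {set {set E}}) : Prop := is_set_lattice D /\ accessible D.

(* rank function rho : D -> N, represented as a total function on {set E}
   whose values outside D are irrelevant *)
Definition is_Urank (D : {set {set E}}) (rho : {set E} -> nat) : Prop :=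
  [/\ rho set0 = 0,
      (forall A B, A \in D -> B \in D -> A \subset B -> rho A <= rho B),
      (forall A B, A \in D -> B \in D ->
          rho (A :|: B) + rho (A :&: B) <= rho A + rho B) &
      (forall A B, A \in D -> B \in D -> A \subset B -> rho B <= rho A + #|B :\: A|)].

Definition is_Umatroid (D : {set {set E}}) (rho : {set E} -> nat) : Prop :=
  is_adl D /\ is_Urank D rho.

Definition is_matroid_rank (rho : {set E} -> nat) : Prop :=
  is_Umatroid [set: {set E}] rho.

Definition atoms (D : {set {set E}}) : {set E} := [set a | [set a] \in D].

Definition supD (D : {set {set E}}) (S : {set E}) : {set E} :=
  \bigcap_(A in D | S \subset A) A.

Definition ext_lattice (D : {set {set E}}) (a : E) : {set {set E}} :=
  D :|: [set A :|: [set a] | A in D].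

Definition gen_rank (D : {set {set E}}) (rho : {set E} -> nat) (a : E)
  : {set E} -> nat :=
  fun S => if S \in D then rho S
           else if rho (S :\ a) == rho (supD D S) then rho (S :\ a)
           else (rho (S :\ a)).+1.

Definition gen_ext (p : {set {set E}} * ({set E} -> nat)) (a : E)
  : {set {set E}} * ({set E} -> nat) :=
  (ext_lattice p.1 a, gen_rank p.1 p.2 a).

Definition iter_gen_ext (D : {set {set E}}) (rho : {set E} -> nat) (s : seq E)
  : {set {set E}} * ({set E} -> nat) :=
  foldl gen_ext (D, rho) s.

Definition nonatom_enum (D : {set {set E}}) (s : seq E) : Prop :=
  perm_eq s (enum (~: atoms D)).

End UMatroid.

(* The generous extension is the cheapest cover: for X in the extended lattice,
     rho_a X = min { rho U + #|X :\: U| : U in D, X \subset U :|: [set a] },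
   the minimum being attained at supD D X or at X :\ a.  Monotonicity,
   submodularity and unit increase of rho_a follow by combining optimal covers
   and using the corresponding property of rho.  A matroid rank rho' bounded
   by rho on D satisfies rho' X <= rho' U + #|X :\: U| <= rho U + #|X :\: U|
   for every cover U, hence stays below rho_a.  Iterating over all non-atoms
   reaches the full power set, and domination gives the rest: two orders yield
   mutually dominating extensions, and a lattice extension rho' on D' agrees
   on D' with the iterated extension of rho', a matroid extension of rho. *)

From mathcomp Require Import all_boot.
Set Implicit Arguments. Unset Strict Implicit. Unset Printing Implicit Defensive.

Section UMatroidExtension.
Variable E : finType.
Implicit Types (D F : {set {set E}}) (A B C P Q R S U V X : {set E}).

Lemma leq_cards_pointwise P Q R S :
  (forall x, (x \in P) + (x \in Q) <= (x \in R) + (x \in S)) ->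
  #|P| + #|Q| <= #|R| + #|S|.
Proof.
have cardT_sum A : #|A| = \sum_x (x \in A) by rewrite -sum1_card big_mkcond.
by move=> le_x; rewrite !cardT_sum -!big_split; apply: leq_sum => x _.
Qed.

Lemma cardsD_UI A B U V :
  #|(A :|: B) :\: (U :|: V)| + #|(A :&: B) :\: (U :&: V)| <= #|A :\: U| + #|B :\: V|.
Proof.
apply: leq_cards_pointwise => x; rewrite !inE.
by case: (x \in A); case: (x \in B); case: (x \in U); case: (x \in V).
Qed.

Lemma cardsD_enlarge A B C U : C \subset B ->
  #|(U :|: C) :\: U| + #|B :\: (U :|: C)| <= #|A :\: U| + #|B :\: A|.
Proof.
move=> /subsetP sCB; apply: leq_cards_pointwise => x; move: (sCB x); rewrite !inE.
move/implyP; by case: (x \in A); case: (x \in B); case: (x \in C); case: (x \in U).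
Qed.

Lemma setT_adl : is_adl [set: {set E}].
Proof.
split; first by split=> *; rewrite inE.
by move=> A _ /set0Pn[x Ax]; exists x; rewrite ?inE.
Qed.

Lemma set_lattice_set1_eqT F :
  is_set_lattice F -> (forall x, [set x] \in F) -> F = [set: {set E}].
Proof.
case=> F0 _ FU _ F1; apply/setP=> X; rewrite inE.
elim: {X}#|X|.+1 {-2}X (ltnSn #|X|) => // n IHn X ltXn.
have [->|[x Xx]] := set_0Vmem X; first exact: F0.
by rewrite -(setD1K Xx) FU ?F1 ?IHn // -ltnS (leq_trans _ ltXn) // (cardsD1 x X) Xx.
Qed.

Lemma supD_mem D S : is_set_lattice D -> supD D S \in D.
Proof.
by case=> _ DT _ DI; apply: (big_ind (fun A => A \in D)) => // A /andP[].
Qed.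

Lemma sub_supD D S : S \subset supD D S.
Proof. by apply/bigcapsP => A /andP[]. Qed.

Lemma supD_min D S A : A \in D -> S \subset A -> supD D S \subset A.
Proof. by move=> DA sSA; apply: bigcap_inf; rewrite DA. Qed.

Lemma Urank_sub D F rho : F \subset D -> is_Urank D rho -> is_Urank F rho.
Proof.
move/subsetP=> sFD [rho0 mono submod unit].
by split=> // A B /sFD DA /sFD DB; [apply: mono | apply: submod | apply: unit].
Qed.

Lemma Urank_le_setD D rho X U : is_set_lattice D -> is_Urank D rho ->
  X \in D -> U \in D -> rho X <= rho U + #|X :\: U|.
Proof.
case=> _ _ closedU _ [_ mono _ unit] DX DU; have DUX := closedU _ _ DU DX.
have -> : X :\: U = (U :|: X) :\: U by rewrite setDUl setDv set0U.
exact: leq_trans (mono _ _ DX DUX (subsetUr U X)) (unit _ _ DU DUX (subsetUl U X)).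
Qed.

Lemma ext_lattice_sub D a : D \subset ext_lattice D a.
Proof. by apply/subsetP=> X DX; rewrite inE DX. Qed.

Lemma ext_latticeP D a X :
  reflect (exists A, [/\ A \in D, A \subset X & X \subset A :|: [set a]])
          (X \in ext_lattice D a).
Proof.
apply: (iffP idP).
  rewrite inE => /orP[DX|/imsetP[A DA ->]]; first by exists X; rewrite subsetUl.
  by exists A; rewrite subsetUl.
case=> A [DA sAX sXA]; rewrite inE; have [aX|naX] := boolP (a \in X).
  apply/orP; right; apply/imsetP; exists A => //.
  by apply/eqP; rewrite eqEsubset sXA subUset sAX sub1set.
suff -> : X = A by rewrite DA.
apply/eqP; rewrite eqEsubset sAX andbT; apply/subsetP=> x Xx.
move: (subsetP sXA x Xx); rewrite in_setU in_set1 => /orP[//|/eqP ex].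
by rewrite -ex Xx in naX.
Qed.

Lemma ext_lattice_notin D a X : X \in ext_lattice D a -> X \notin D ->
  a \in X /\ X :\ a \in D.
Proof.
rewrite inE => /orP[-> //|/imsetP[A DA ->]] nDX.
have naA : a \notin A by apply: contra nDX => aA; rewrite (setUidPl _) ?sub1set.
by rewrite setUC setU11 setU1K.
Qed.

Lemma ext_lattice_lattice D a : is_set_lattice D -> is_set_lattice (ext_lattice D a).
Proof.
case=> D0 DT closedU closedI; have sD := subsetP (ext_lattice_sub D a).
split; [exact: sD | exact: sD | |] => X Y /ext_latticeP[A [DA sAX sXA]]
  /ext_latticeP[B [DB sBY sYB]]; apply/ext_latticeP.
  exists (A :|: B); split; [exact: closedU | exact: setUSS | by rewrite setUUl setUSS].
exists (A :&: B); split; [exact: closedI | exact: setISS | by rewrite setUIl setISS].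
Qed.

Section OneExtension.
Variables (D : {set {set E}}) (rho : {set E} -> nat) (a : E).
Hypotheses (latD : is_set_lattice D) (rankD : is_Urank D rho).
Local Notation Dx := (ext_lattice D a).
Local Notation ra := (gen_rank D rho a).

Lemma gen_rank_in S : S \in D -> ra S = rho S.
Proof. by rewrite /gen_rank => ->. Qed.

Lemma gen_rank_notin X : X \in Dx -> X \notin D ->
  ra X = minn (rho (supD D X)) (rho (X :\ a)).+1.
Proof.
move=> DxX nDX; have [_ DXa] := ext_lattice_notin DxX nDX.
have [_ mono _ _] := rankD.
have le_sup : rho (X :\ a) <= rho (supD D X).
  exact: mono (supD_mem _ latD) (subset_trans (subD1set X a) (sub_supD D X)).
rewrite /gen_rank (negbTE nDX); case: eqP => [->|/eqP ne].
  by rewrite (minn_idPl (leqnSn _)).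
by rewrite (minn_idPr _) // ltn_neqAle ne le_sup.
Qed.

Lemma gen_rank_le_cover X U : X \in Dx -> U \in D -> X \subset U :|: [set a] ->
  ra X <= rho U + #|X :\: U|.
Proof.
move=> DxX DU sXU; have [_ mono _ _] := rankD.
have [DX|nDX] := boolP (X \in D); first by rewrite gen_rank_in // (Urank_le_setD latD rankD).
have [aX DXa] := ext_lattice_notin DxX nDX.
rewrite gen_rank_notin // geq_min; have [aU|naU] := boolP (a \in U).
  move: sXU; rewrite (setUidPl _) ?sub1set // => sXU; apply/orP; left.
  by rewrite (leq_trans _ (leq_addr _ _)) // mono ?supD_mem ?supD_min.
apply/orP; right; rewrite -addn1 leq_add //.
  by apply: mono; rewrite // subDset setUC.
by rewrite card_gt0; apply/set0Pn; exists a; rewrite inE naU.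
Qed.

Lemma gen_rank_cover X : X \in Dx ->
  exists U, [/\ U \in D, X \subset U :|: [set a] & ra X = rho U + #|X :\: U|].
Proof.
move=> DxX; have [DX|nDX] := boolP (X \in D).
  by exists X; rewrite gen_rank_in // setDv cards0 addn0 subsetUl.
have [aX DXa] := ext_lattice_notin DxX nDX.
rewrite gen_rank_notin //; case: leqP => _.
  exists (supD D X); have /eqP-> : X :\: supD D X == set0 by rewrite setD_eq0 sub_supD.
  by rewrite cards0 addn0 supD_mem // (subset_trans (sub_supD D X)) ?subsetUl.
exists (X :\ a); rewrite setUC setD1K //.
by rewrite setDDr setDv set0U (setIidPr _) ?sub1set // cards1 addn1.
Qed.

Lemma gen_rank_mono A B : A \in Dx -> B \in Dx -> A \subset B -> ra A <= ra B.
Proof.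
move=> DxA DxB sAB; have [U [DU sBU ->]] := gen_rank_cover DxB.
apply: leq_trans (gen_rank_le_cover DxA DU (subset_trans sAB sBU)) _.
by rewrite leq_add2l subset_leq_card // setSD.
Qed.

Lemma gen_rank_submod A B : A \in Dx -> B \in Dx ->
  ra (A :|: B) + ra (A :&: B) <= ra A + ra B.
Proof.
move=> DxA DxB; have [_ _ closedxU closedxI] := ext_lattice_lattice a latD.
have [_ _ closedU closedI] := latD; have [_ _ submod _] := rankD.
have [U [DU sAU ->]] := gen_rank_cover DxA.
have [V [DV sBV ->]] := gen_rank_cover DxB.
have le_cup : ra (A :|: B) <= rho (U :|: V) + #|(A :|: B) :\: (U :|: V)|.
  by rewrite gen_rank_le_cover ?closedxU ?closedU // setUUl setUSS.
have le_cap : ra (A :&: B) <= rho (U :&: V) + #|(A :&: B) :\: (U :&: V)|.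
  by rewrite gen_rank_le_cover ?closedxI ?closedI // setUIl setISS.
apply: leq_trans (leq_add le_cup le_cap) _.
by rewrite addnACA [X in _ <= X]addnACA leq_add ?submod ?cardsD_UI.
Qed.

Lemma gen_rank_unit A B : A \in Dx -> B \in Dx -> A \subset B ->
  ra B <= ra A + #|B :\: A|.
Proof.
move=> DxA DxB sAB; have [U [DU sAU ->]] := gen_rank_cover DxA.
have /ext_latticeP[C [DC sCB sBC]] := DxB.
have [_ _ closedU _] := latD; have [_ _ _ unit] := rankD.
have DUC := closedU _ _ DU DC.
have sBUC : B \subset (U :|: C) :|: [set a].
  exact: subset_trans sBC (setSU _ (subsetUr U C)).
apply: leq_trans (gen_rank_le_cover DxB DUC sBUC) _.
apply: leq_trans (leq_add (unit _ _ DU DUC (subsetUl U C)) (leqnn _)) _.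
by rewrite -!addnA leq_add2l cardsD_enlarge.
Qed.

Lemma gen_rank_Urank : is_Urank Dx ra.
Proof.
split; [|exact: gen_rank_mono|exact: gen_rank_submod|exact: gen_rank_unit].
by have [D0 _ _ _] := latD; have [rho0 _ _ _] := rankD; rewrite gen_rank_in.
Qed.

Lemma gen_rank_max rho' : is_Urank [set: {set E}] rho' ->
  (forall S, S \in D -> rho' S <= rho S) -> forall X, X \in Dx -> rho' X <= ra X.
Proof.
move=> rank' le_rho X DxX; have [U [DU _ ->]] := gen_rank_cover DxX.
apply: leq_trans (Urank_le_setD setT_adl.1 rank' (in_setT X) (in_setT U)) _.
by rewrite leq_add2r le_rho.
Qed.

End OneExtension.

Lemma iter_gen_ext_Urank D rho s : is_set_lattice D -> is_Urank D rho ->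
  is_set_lattice (iter_gen_ext D rho s).1 /\
  is_Urank (iter_gen_ext D rho s).1 (iter_gen_ext D rho s).2.
Proof.
elim: s D rho => [|a s IHs] D rho latD rankD //.
exact: IHs (ext_lattice_lattice a latD) (gen_rank_Urank a latD rankD).
Qed.

Lemma sub_iter_gen_ext D rho s : D \subset (iter_gen_ext D rho s).1.
Proof.
elim: s D rho => [|a s IHs] D rho; first exact: subxx.
exact: subset_trans (ext_lattice_sub D a) (IHs _ _).
Qed.

Lemma iter_gen_ext_restrict D rho s S : S \in D -> (iter_gen_ext D rho s).2 S = rho S.
Proof.
elim: s D rho => [|a s IHs] D rho DS //=.
by rewrite IHs ?gen_rank_in // (subsetP (ext_lattice_sub D a)).
Qed.

Lemma set1_mem_iter_gen_ext D rho s x : set0 \in D -> x \in s ->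
  [set x] \in (iter_gen_ext D rho s).1.
Proof.
elim: s D rho => [|a s IHs] D rho D0 //; rewrite inE => /predU1P[->|sx].
  apply: (subsetP (sub_iter_gen_ext _ _ s)); apply/ext_latticeP.
  by exists set0; rewrite sub0set set0U.
exact: IHs (subsetP (ext_lattice_sub D a) _ D0) sx.
Qed.

Lemma iter_gen_ext_max D rho s rho' : is_set_lattice D -> is_Urank D rho ->
  is_Urank [set: {set E}] rho' -> (forall S, S \in D -> rho' S <= rho S) ->
  forall S, S \in (iter_gen_ext D rho s).1 -> rho' S <= (iter_gen_ext D rho s).2 S.
Proof.
elim: s D rho => [|a s IHs] D rho latD rankD rank' le_rho; first exact: le_rho.
exact: IHs _ _ (ext_lattice_lattice a latD) (gen_rank_Urank a latD rankD) rank'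
  (gen_rank_max latD rankD rank' le_rho).
Qed.

Lemma iter_gen_ext_matroid D rho s : is_set_lattice D -> is_Urank D rho ->
  {subset ~: atoms D <= s} ->
  (iter_gen_ext D rho s).1 = [set: {set E}] /\ is_matroid_rank (iter_gen_ext D rho s).2.
Proof.
move=> latD rankD nonatoms_s; have [latI rankI] := iter_gen_ext_Urank s latD rankD.
have fullI : (iter_gen_ext D rho s).1 = [set: {set E}].
  apply: set_lattice_set1_eqT latI _ => x; have [Ax|nAx] := boolP (x \in atoms D).
    by apply: (subsetP (sub_iter_gen_ext D rho s)); rewrite inE in Ax.
  by apply: set1_mem_iter_gen_ext; [case: latD | apply: nonatoms_s; rewrite inE].
by split=> //; split; [exact: setT_adl | rewrite -fullI].
Qed.

Lemma iter_gen_ext_greatest D rho s rho' : is_set_lattice D -> is_Urank D rho ->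
  {subset ~: atoms D <= s} -> is_matroid_rank rho' ->
  (forall S, S \in D -> rho' S = rho S) -> forall S, rho' S <= (iter_gen_ext D rho s).2 S.
Proof.
move=> latD rankD nonatoms_s [_ rank'] ext' S.
have [fullI _] := iter_gen_ext_matroid latD rankD nonatoms_s.
by apply: iter_gen_ext_max => // [T /ext'->|]; rewrite ?fullI ?inE.
Qed.

End UMatroidExtension.

Theorem theorem4p12 (E : finType) (D : {set {set E}}) (rho : {set E} -> nat)
    (hU : is_Umatroid D rho) (s : seq E) (hs : nonatom_enum D s) :
  let rhohat := (iter_gen_ext D rho s).2 in
  (* 1. rhohat is a matroid rank function on 2^E extending rho, and it
        dominates every matroid extension of rho *)
  [/\ (iter_gen_ext D rho s).1 = [set: {set E}],
      is_matroid_rank rhohat &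
      (forall S, S \in D -> rhohat S = rho S)] /\
  [/\
      (forall rho' : {set E} -> nat, is_matroid_rank rho' ->
         (forall S, S \in D -> rho' S = rho S) ->
         forall S, rho' S <= rhohat S),
  (* 2. rhohat does not depend on the order of the non-atoms *)
      (forall s' : seq E, nonatom_enum D s' ->
         forall S, (iter_gen_ext D rho s').2 S = rhohat S) &
  (* 3. for every lattice D' with D ⊆ D' ⊆ 2^E, rhohat|D' is a lattice extension
        (when D' is accessible, as the U-matroid notion requires) and it
        dominates every lattice extension of U to D' *)
      (forall D' : {set {set E}}, D \subset D' -> is_set_lattice D' ->
         (accessible D' -> is_Umatroid D' rhohat) /\
         (forall rho' : {set E} -> nat, is_Umatroid D' rho' ->
            (forall S, S \in D -> rho' S = rho S) ->
            forall S, S \in D' -> rho' S <= rhohat S))].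
Proof.
move=> rhohat; case: hU => [[latD _] rankD].
have nonatoms t : nonatom_enum D t -> {subset ~: atoms D <= t}.
  by move=> ht x; rewrite (perm_mem ht) mem_enum.
have restrict t : forall S, S \in D -> (iter_gen_ext D rho t).2 S = rho S.
  exact: iter_gen_ext_restrict.
have [fullI matroid] := iter_gen_ext_matroid latD rankD (nonatoms s hs).
have greatest := iter_gen_ext_greatest latD rankD (nonatoms s hs).
split; first by split=> //; apply: restrict.
split=> [|s' hs' S|D' sDD' latD'].
- exact: greatest.
- have [_ matroid'] := iter_gen_ext_matroid latD rankD (nonatoms s' hs').
  have le_s := greatest _ matroid' (restrict s').
  have le_s' := iter_gen_ext_greatest latD rankD (nonatoms s' hs') matroid (restrict s).
  by apply/eqP; rewrite eqn_leq le_s le_s'.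
- split=> [accD'|rho' [_ rank'] ext' S D'S].
    by split; [split | exact: Urank_sub (subsetT D') matroid.2].
  have all_enum : {subset ~: atoms D' <= enum [set: E]} by move=> x _; rewrite mem_enum inE.
  have [_ matroid'] := iter_gen_ext_matroid latD' rank' all_enum.
  rewrite -(iter_gen_ext_restrict rho' (enum [set: E]) D'S); apply: greatest => // T DT.
  by rewrite iter_gen_ext_restrict ?ext' ?(subsetP sDD').
Qed.
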